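(* Let $S$ be a finite set of states, $A$ a finite set of action profiles, and $Y$, $Y'$ finite sets of public signals. Let $q(\cdot\mid s)\in\Delta(S)$ for each $s\in S$ be an action-independent state transition, and let $S(s)=\{t\in S: q(t\mid s)>0\}$. Let $f(\cdot\mid s,t,a)\in\Delta(Y)$ and $f'(\cdot\mid s,t,a)\in\Delta(Y')$ for all $(s,t,a)\in S\times S\times A$, and define the monitoring structures $\Pi$ and $\Pi'$ by $$p(t,y\mid s,a)=f(y\mid s,t,a)\,q(t\mid s),\qquad p'(t',y'\mid s,a)=f'(y'\mid s,t',a)\,q(t'\mid s).$$ Suppose that for every $s\in S$ and every $t\in S(s)$ there exists $t'\in S(s)$ such that $f'$ conditional on $(s,t')$ is more WG-informative than $f$ conditional on $(s,t)$. Then $\Pi$ is a weighted garbling of $\Pi'$.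
   Context: Definitions. (i) $f'$ conditional on $(s,t')$ is more WG-informative than $f$ conditional on $(s,t)$ if there exist weights $\gamma^{y'}\ge 0$ and distributions $\phi(\cdot\mid y')\in\Delta(Y)$, for $y'\in Y'$, such that $f(y\mid s,t,a)=\sum_{y'\in Y'}\gamma^{y'}\phi(y\mid y')f'(y'\mid s,t',a)$ for all $y\in Y$ and all $a\in A$. (ii) A monitoring structure $\Pi$, given by $p(t,y\mid s,a)$ (probability that the next state is $t$ and the public signal is $y$ when the current state is $s$ and action profile $a$ is played), is a weighted garbling of $\Pi'$, given by $p'(t',y'\mid s,a)$ on $S\times Y'$, if for every $s\in S$ there exist weights $\gamma_s^{t',y'}\ge 0$ and distributions $\phi_s(\cdot,\cdot\mid t',y')\in\Delta(S\times Y)$, for $(t',y')\in S\times Y'$, such that $p(t,y\mid s,a)=\sum_{(t',y')\in S\times Y'}\gamma_s^{t',y'}\phi_s(t,y\mid t',y')\,p'(t',y'\mid s,a)$ for all $(t,y)\in S\times Y$ and all $a\in A$. *)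

From mathcomp Require Import all_boot all_order all_algebra.
Set Implicit Arguments. Unset Strict Implicit. Unset Printing Implicit Defensive.
Import Order.TTheory GRing.Theory Num.Theory.
Local Open Scope ring_scope.

Definition is_dist (R : realFieldType) (T : finType) (p : T -> R) : Prop :=
  (forall x, 0 <= p x) /\ \sum_(x : T) p x = 1.

(* Definition (i): f' conditional on (s,t') is more WG-informative than
   f conditional on (s,t).  f s t a y = f(y | s,t,a). *)
Definition more_WG_informative (R : realFieldType) (S A Y Y' : finType)
  (f' : S -> S -> A -> Y' -> R) (s t' : S)
  (f : S -> S -> A -> Y -> R) (t : S) : Prop :=
  exists (gamma : Y' -> R) (phi : Y' -> Y -> R),
    (forall y', 0 <= gamma y') /\ (forall y', is_dist (phi y')) /\
    (forall (y : Y) (a : A),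
        f s t a y = \sum_(y' : Y') gamma y' * phi y' y * f' s t' a y').

(* Definition (ii): monitoring structure p (p s a (t,y) = p(t,y|s,a)) is a
   weighted garbling of p'. *)
Definition weighted_garbling (R : realFieldType) (S A Y Y' : finType)
  (p : S -> A -> (S * Y)%type -> R) (p' : S -> A -> (S * Y')%type -> R) : Prop :=
  forall s : S,
  exists (gamma : (S * Y')%type -> R) (phi : (S * Y')%type -> (S * Y)%type -> R),
    (forall ty', 0 <= gamma ty') /\ (forall ty', is_dist (phi ty')) /\
    (forall (ty : (S * Y)%type) (a : A),
        p s a ty = \sum_(ty' : (S * Y')%type) gamma ty' * phi ty' ty * p' s a ty').

Definition monitoring (R : realFieldType) (S A Y : finType)
  (f : S -> S -> A -> Y -> R) (q : S -> S -> R) : S -> A -> (S * Y)%type -> R :=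
  fun s a ty => f s ty.1 a ty.2 * q s ty.1.

(* For every t in S(s) choose t' = sigma t and a
   WG-decomposition (gamma_t, phi_t) of f(.|s,t,.) through f'(.|s,t',.).
   Multiplying by q(t|s) = (q(t|s) / q(t'|s)) q(t'|s) writes p(t,y|s,a) as a
   nonnegative combination of the p'(t',y'|s,a), with coefficients
   M((t',y'),(t,y)) = [sigma t = t'] gamma_t(y') phi_t(y')(y) q(t|s) / q(t'|s);
   for t outside S(s) both sides vanish.  Finally any nonnegative kernel M
   factors as gamma(x) phi(x)(z) with phi(x) a distribution: take gamma(x) the
   row sum of M and phi(x) the normalised row. *)
From Stdlib Require ClassicalEpsilon.
From mathcomp Require Import all_boot all_order all_algebra.
From mathcomp Require Import ring.
Set Implicit Arguments. Unset Strict Implicit. Unset Printing Implicit Defensive.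
Import Order.TTheory GRing.Theory Num.Theory.
Local Open Scope ring_scope.

Section Distributions.
Variable R : realFieldType.

Lemma is_dist_supportN0 (T : finType) (p : T -> R) :
  is_dist p -> exists x, 0 < p x.
Proof.
move=> [p_ge0 p_sum1]; apply/existsP; apply: contraT.
rewrite negb_exists => /forallP p_le0.
have : \sum_x p x = 0.
  by apply: big1 => x _; apply/le_anti; rewrite p_ge0 andbT leNgt p_le0.
by rewrite p_sum1 => /eqP; rewrite oner_eq0.
Qed.

Lemma is_dist_prod (T U : finType) (p : T -> R) (r : U -> R) :
  is_dist p -> is_dist r -> is_dist (fun z : T * U => p z.1 * r z.2).
Proof.
move=> [p_ge0 p_sum1] [r_ge0 r_sum1]; split=> [z|]; first exact: mulr_ge0.
rewrite -(pair_big xpredT xpredT (fun x y => p x * r y)) /=.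
by under eq_bigr => x _ do rewrite -mulr_sumr r_sum1 mulr1.
Qed.

(* [d] only serves as the normalised row of the rows of [M] that vanish. *)
Lemma nonneg_kernel_factor (X Z : finType) (M d : X -> Z -> R) :
  (forall x z, 0 <= M x z) -> (forall x, is_dist (d x)) ->
  exists (gamma : X -> R) (phi : X -> Z -> R),
    [/\ forall x, 0 <= gamma x, forall x, is_dist (phi x)
      & forall x z, M x z = gamma x * phi x z].
Proof.
move=> M_ge0 d_dist; pose rowM x := \sum_z M x z.
exists rowM, (fun x z => if rowM x == 0 then d x z else M x z / rowM x).
split=> [x|x|x z]; first exact: sumr_ge0.
- have [//|rowM_neq0] := eqVneq (rowM x) 0.
  split=> [z|]; first by rewrite divr_ge0 ?sumr_ge0.
  by rewrite -mulr_suml divff.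
- have [rowM0|rowM_neq0] := eqVneq (rowM x) 0; last by rewrite mulrC divfK.
  by rewrite rowM0 mul0r; move/psumr_eq0P: rowM0 => ->.
Qed.

End Distributions.

Section WGKernel.
Variables (R : realFieldType) (S A Y Y' : finType) (q : S -> S -> R).
Variables (f : S -> S -> A -> Y -> R) (f' : S -> S -> A -> Y' -> R) (s : S).
Hypothesis q_ge0 : forall t, 0 <= q s t.

Variables (sigma : S -> S) (gamma : S -> Y' -> R) (phi : S -> Y' -> Y -> R).
Hypothesis gamma_ge0 : forall t y', 0 <= gamma t y'.
Hypothesis phi_ge0 : forall t y' y, 0 <= phi t y' y.
Hypothesis f_WG : forall t, 0 < q s t ->
  forall y a, f s t a y = \sum_y' gamma t y' * phi t y' y * f' s (sigma t) a y'.
Hypothesis q_sigma_gt0 : forall t, 0 < q s t -> 0 < q s (sigma t).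

Definition wg_kernel (x : S * Y') (z : S * Y) : R :=
  if sigma z.1 == x.1 then
    gamma z.1 x.2 * phi z.1 x.2 z.2 * q s z.1 / q s x.1
  else 0.

Lemma wg_kernel_ge0 x z : 0 <= wg_kernel x z.
Proof. by rewrite /wg_kernel; case: eqP => _; rewrite ?divr_ge0 ?mulr_ge0. Qed.

Lemma monitoring_wg_kernel z a :
  monitoring f q s a z = \sum_x wg_kernel x z * monitoring f' q s a x.
Proof.
case: z => t y; rewrite /monitoring /=.
rewrite -(pair_big xpredT xpredT
  (fun t' y' => wg_kernel (t', y') (t, y) * (f' s t' a y' * q s t'))) /=.
have [q_t_gt0|] := boolP (0 < q s t); last first.
  rewrite -leNgt => q_t_le0; have q_t0 : q s t = 0 by apply/le_anti/andP.
  rewrite q_t0 mulr0 big1 // => t' _; apply: big1 => y' _.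
  by rewrite /wg_kernel /= q_t0; case: eqP; rewrite !(mulr0, mul0r).
rewrite (bigD1 (sigma t)) //= [X in _ + X]big1 ?addr0 => [|t' t'_neq]; last first.
  by apply: big1 => y' _; rewrite /wg_kernel /= eq_sym (negPf t'_neq) mul0r.
rewrite f_WG // mulr_suml; apply: eq_bigr => y' _; rewrite /wg_kernel /= eqxx.
have q_sigma_neq0 : q s (sigma t) != 0 by rewrite gt_eqF ?q_sigma_gt0.
by field.
Qed.

End WGKernel.

Lemma more_WG_informative_choice (R : realFieldType) (S A Y Y' : finType)
    (q : S -> S -> R) (f : S -> S -> A -> Y -> R)
    (f' : S -> S -> A -> Y' -> R) (s : S) :
  (forall t, 0 < q s t -> exists t', 0 < q s t' /\ more_WG_informative f' s t' f t) ->
  exists (sigma : S -> S) (gamma : S -> Y' -> R) (phi : S -> Y' -> Y -> R),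
    [/\ forall t y', 0 <= gamma t y', forall t y' y, 0 <= phi t y' y,
       forall t, 0 < q s t -> 0 < q s (sigma t),
       forall t, 0 < q s t -> forall y', is_dist (phi t y')
     & forall t, 0 < q s t -> forall y a,
         f s t a y = \sum_y' gamma t y' * phi t y' y * f' s (sigma t) a y'].
Proof.
move=> hWG.
have /ClassicalEpsilon.choice[w wP] :
    forall t, exists w : S * (Y' -> R) * (Y' -> Y -> R),
    [/\ forall y', 0 <= w.1.2 y', forall y' y, 0 <= w.2 y' y
      & 0 < q s t -> [/\ 0 < q s w.1.1, forall y', is_dist (w.2 y')
        & forall y a, f s t a y = \sum_y' w.1.2 y' * w.2 y' y * f' s w.1.1 a y']].
  move=> t; have [q_t_gt0|_] := boolP (0 < q s t).
    have [t' [q_t'_gt0 [g [ph [g_ge0 [ph_dist f_eq]]]]]] := hWG t q_t_gt0.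
    by exists (t', g, ph); split=> // y' y; case: (ph_dist y') => ->.
  by exists (t, fun _ => 0, fun _ _ => 0); split.
exists (fun t => (w t).1.1), (fun t => (w t).1.2), (fun t => (w t).2).
by split=> t; case: (wP t) => // _ _ /[apply] [[]].
Qed.

Theorem mainTheorem1 (R : realFieldType) (S A Y Y' : finType)
  (q : S -> S -> R)
  (f : S -> S -> A -> Y -> R) (f' : S -> S -> A -> Y' -> R)
  (hq : forall s, is_dist (q s))
  (hf : forall s t a, is_dist (f s t a))
  (hf' : forall s t a, is_dist (f' s t a))
  (hWG : forall s t, 0 < q s t ->
     exists t', 0 < q s t' /\ more_WG_informative f' s t' f t) :
  weighted_garbling (monitoring f q) (monitoring f' q).
Proof.
move=> s; have q_ge0 := (hq s).1.
have [sigma [gamma [phi [gamma_ge0 phi_ge0 q_sigma_gt0 phi_dist f_WG]]]] :=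
  more_WG_informative_choice (hWG s).
have [t0 q_t0_gt0] := is_dist_supportN0 (hq s).
have [||g [ph [g_ge0 ph_dist M_eq]]] := nonneg_kernel_factor
  (M := wg_kernel q s sigma gamma phi) (d := fun x z => q s z.1 * phi t0 x.2 z.2).
- by move=> x z; apply: wg_kernel_ge0.
- by move=> x; apply: is_dist_prod => //; apply: phi_dist.
exists g, ph; do 2!split=> //; move=> z a.
rewrite (monitoring_wg_kernel q_ge0 f_WG q_sigma_gt0).
by apply: eq_bigr => x _; rewrite M_eq.
Qed.
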